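(* Let $f:\mathbb R^{n+m}\to\mathbb R$ be convex and let $g(x) = \inf_y f(x,y)$, assumed finite for every $x\in\mathbb R^n$ (so $g:\mathbb R^n\to\mathbb R$ is convex). Let $H_1:\mathbb R^n\to\mathbb R^n$ be the single-valued inverse of $x\mapsto x+\nabla_xg$ (so $H_1(u)=x\iff u\in x+\nabla_xg$) and $H:\mathbb R^{n+m}\to\mathbb R^{n+m}$ the single-valued inverse of $(x,y)\mapsto (x,y)+\nabla_{(x,y)}f$ (so $H(u,v)=(x,y)\iff (u,v)\in (x,y)+\nabla_{(x,y)}f$); these inverses exist. Define $J:\mathbb R^{n}\times \mathbb R^{n}\times \mathbb R^{m} \to \mathbb R^{m}$ by $J(x,u,y) = y - \pi_2 H(H_1(x+u)+u,y)$, where $\pi_2:\mathbb R^{n+m}\to\mathbb R^m$ is the second projection. Then $J(x,u,\gamma) =0$ for all $x\in \mathbb R^n$, all $\gamma\in \operatorname{argmin}_f(x)$ and all $u\in \nabla_x g$.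
   Context: For $h:\mathbb R^k\to\mathbb R$ and $z_0\in\mathbb R^k$, $\nabla_{z_0}h=\{u\in\mathbb R^k: h(z)-h(z_0)\ge u\cdot(z-z_0)\text{ for all } z \text{ sufficiently near } z_0\}$. $\operatorname{argmin}_f(x)=\{\gamma\in\mathbb R^m: \inf_{y}f(x,y)=f(x,\gamma)\}$. *)

(* R^k is rendered as 'rV[R]_k. *)
From HB Require Import structures.
From mathcomp Require Import all_boot all_order all_algebra.
From mathcomp Require Import all_classical all_reals all_analysis.
Set Implicit Arguments. Unset Strict Implicit. Unset Printing Implicit Defensive.
Import Order.TTheory GRing.Theory Num.Theory numFieldNormedType.Exports.
Local Open Scope classical_set_scope.
Local Open Scope ring_scope.

Definition dotv (R : realType) (k : nat) (u v : 'rV[R]_k) : R :=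
  \sum_(i < k) u 0 i * v 0 i.

Definition convex_fun (R : realType) (k : nat) (h : 'rV[R]_k -> R) : Prop :=
  forall (a b : 'rV[R]_k) (t : R), 0 <= t <= 1 ->
    h (t *: a + (1 - t) *: b) <= t * h a + (1 - t) * h b.

Definition subgrad (R : realType) (k : nat) (h : 'rV[R]_k -> R)
    (z0 u : 'rV[R]_k) : Prop :=
  \forall z \near z0, h z - h z0 >= dotv u (z - z0).

(* argmin_f(x) = { gamma | inf_y f(x,y) = f(x,gamma) }, (x,y) ~ row_mx x y *)
Definition argmin (R : realType) (n m : nat) (f : 'rV[R]_(n + m) -> R)
    (x : 'rV[R]_n) : set 'rV[R]_m :=
  [set gam | inf [set f (row_mx x y) | y in [set: 'rV[R]_m]] = f (row_mx x gam)].

Definition Jmap (R : realType) (n m : nat) (H1 : 'rV[R]_n -> 'rV[R]_n)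
    (H : 'rV[R]_(n + m) -> 'rV[R]_(n + m)) (x u : 'rV[R]_n) (y : 'rV[R]_m)
    : 'rV[R]_m :=
  y - rsubmx (H (row_mx (H1 (x + u) + u) y)).

From HB Require Import structures.
From mathcomp Require Import all_boot all_order all_algebra.
From mathcomp Require Import all_classical all_reals all_analysis.
Import Order.TTheory GRing.Theory Num.Theory numFieldNormedType.Exports.
Local Open Scope classical_set_scope.
Local Open Scope ring_scope.

(* If gam minimizes f(x, .) and u is a subgradient of the marginal g at x,
   then (u, 0) is a subgradient of f at (x, gam): near (x, gam),
   f z - f(x, gam) >= g(pi_1 z) - g x >= u . (pi_1 z - x).
   Hence the resolvent identities H1 (x + u) = x and H (x + u, gam) = (x, gam)
   hold, and J(x, u, gam) = gam - gam = 0. *)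

Section MarginalSubgradient.
Variables (R : realType) (n m : nat).

Lemma dotv_row_mx0 (u : 'rV[R]_n) (w : 'rV[R]_(n + m)) :
  dotv (row_mx u 0) w = dotv u (lsubmx w).
Proof.
rewrite /dotv big_split_ord /= [X in _ + X]big1 ?addr0; last first.
  by move=> i _; rewrite row_mxEr mxE mul0r.
by apply: eq_bigr => i _; rewrite row_mxEl mxE.
Qed.

Lemma ball_lsubmx (z w : 'rV[R]_(n + m)) (e : R) :
  ball z e w -> ball (lsubmx z) e (lsubmx w).
Proof.
by move=> [e_gt0 zw_e]; split=> // i j; rewrite !mxE; apply: zw_e.
Qed.

Lemma near_lsubmx (P : 'rV[R]_n -> Prop) (x : 'rV[R]_n) (y : 'rV[R]_m) :
  (\forall x' \near x, P x') -> \forall z \near row_mx x y, P (lsubmx z).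
Proof.
move=> /nbhs_ballP[e e_gt0 xe_P]; apply/nbhs_ballP; exists e => // z xyz_e.
by apply: xe_P; rewrite -[x](row_mxKl x y); apply: ball_lsubmx.
Qed.

Lemma subgrad_row_mx0 (f : 'rV[R]_(n + m) -> R) (g : 'rV[R]_n -> R)
    (x u : 'rV[R]_n) (gam : 'rV[R]_m) :
  (forall z, g (lsubmx z) <= f z) -> f (row_mx x gam) = g x ->
  subgrad g x u -> subgrad f (row_mx x gam) (row_mx u 0).
Proof.
move=> g_le_f fxgam /(near_lsubmx _ _ gam); apply: filterS => z.
rewrite dotv_row_mx0 linearB /= row_mxKl fxgam => g_ge.
by apply: le_trans g_ge _; rewrite lerB.
Qed.

Lemma inf_image_row_mx_le (f : 'rV[R]_(n + m) -> R) (z : 'rV[R]_(n + m)) :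
  has_lbound [set f (row_mx (lsubmx z) y) | y in [set: 'rV[R]_m]] ->
  inf [set f (row_mx (lsubmx z) y) | y in [set: 'rV[R]_m]] <= f z.
Proof.
by move=> lb; apply: ge_inf => //; exists (rsubmx z) => //; rewrite hsubmxK.
Qed.

End MarginalSubgradient.

Theorem proposition2p13 (R : realType) (n m : nat)
    (f : 'rV[R]_(n + m) -> R) (g : 'rV[R]_n -> R)
    (H1 : 'rV[R]_n -> 'rV[R]_n) (H : 'rV[R]_(n + m) -> 'rV[R]_(n + m)) :
  convex_fun f ->
  (forall x : 'rV[R]_n,
      has_lbound [set f (row_mx x y) | y in [set: 'rV[R]_m]]) ->
  (forall x : 'rV[R]_n,
      g x = inf [set f (row_mx x y) | y in [set: 'rV[R]_m]]) ->
  (forall u x : 'rV[R]_n, H1 u = x <-> subgrad g x (u - x)) ->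
  (forall w z : 'rV[R]_(n + m), H w = z <-> subgrad f z (w - z)) ->
  forall (x u : 'rV[R]_n) (gam : 'rV[R]_m),
    argmin f x gam -> subgrad g x u -> Jmap H1 H x u gam = 0.
Proof.
move=> _ f_lb gE H1P HP x u gam gam_min sub_g.
have H1_xu : H1 (x + u) = x by apply/H1P; rewrite [x + u]addrC addrK.
have g_le_f z : g (lsubmx z) <= f z by rewrite gE; apply: inf_image_row_mx_le.
have sub_f : subgrad f (row_mx x gam) (row_mx u 0).
  by apply: subgrad_row_mx0 => //; rewrite gE gam_min.
have H_xu : H (row_mx (x + u) gam) = row_mx x gam.
  by apply/HP; rewrite opp_row_mx add_row_mx [x + u]addrC addrK subrr.
by rewrite /Jmap H1_xu H_xu row_mxKr subrr.
Qed.
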